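(* For the Hydra game played on any finite rooted unweighted tree $T$ of height $h_T$ with $L_T$ leaves, the total (expected) cost of the algorithm $\mathrm{HERC}$ is at most $O(h_T\cdot(1+\log L_T))$, i.e., there is an absolute constant $C$ such that for every such tree and every (oblivious) adversary, the total cost of $\mathrm{HERC}$ is at most $C\,h_T(1+\log L_T)$.
   Context: Hydra game: played between an online algorithm and an oblivious adversary on a fixed finite rooted unweighted tree $T$ known in advance. Each node is asleep, alive, or dead. Initially the root $r_T$ is alive and all other nodes are asleep. In each step the adversary picks an alive node $w$, makes it dead, and makes all its children alive (so all ancestors of alive nodes are dead and all their descendants asleep). The algorithm must always remain at an alive node (initially the root); if its node is killed it must move to an alive node $w'$, paying $\mathrm{dist}(w,w')$, the shortest-path distance in $T$. The game ends when all nodes except one are dead; the goal is to minimize total movement cost. $\mathrm{rank}(u)$ is the number of non-dead leaves in the subtree of $u$. The randomized algorithm $\mathrm{HERC}$ keeps its position distributed according to $\eta$, where $\eta(u)=\mathrm{rank}(u)/\mathrm{rank}(r_T)$ for alive $u$ and $\eta(u)=0$ otherwise; when an alive node $u$ is killed, if $u$ is not a leaf its probability is distributed to its children proportionally to their ranks, and if $u$ is a leaf all other probabilities are scaled by $1/(1-\eta(u))$. Its cost is the transport cost: moving probability mass $p$ from $u$ to $w$ costs $p\cdot \mathrm{dist}(u,w)$ (which equals the expected movement cost of a corresponding randomized strategy). *)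

From HB Require Import structures.
From mathcomp Require Import all_boot all_order all_algebra.
From mathcomp Require Import reals exp.
Set Implicit Arguments. Unset Strict Implicit. Unset Printing Implicit Defensive.
Import Order.TTheory GRing.Theory Num.Theory.
Local Open Scope ring_scope.

Section Hydra.
Variables (T : finType) (r : T) (par : T -> T).

Definition is_rooted_tree : Prop :=
  par r = r /\ forall u : T, exists k : nat, iter k par u = r.

Definition adj (u v : T) : bool := (u != v) && ((par u == v) || (par v == u)).

Fixpoint reach (n : nat) (u v : T) : bool :=
  if n is n'.+1 then [exists w, adj u w && reach n' w v] else u == v.

(* Shortest-path distance in the (connected) tree: least n with a walk of
   length n (distances in a tree on #|T| nodes are < #|T|). *)
Definition dist (u v : T) : nat := find (fun n => reach n u v) (iota 0 #|T|).

Definition depth (u : T) : nat := dist u r.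
Definition height : nat := \max_(u : T) depth u.

Definition is_child (c u : T) : bool := (c != r) && (par c == u).
Definition is_leaf (u : T) : bool := [forall c, ~~ is_child c u].
Definition nleaves : nat := #|[set l | is_leaf l]|.

Definition desc (v u : T) : bool := [exists k : 'I_#|T|, iter k par v == u].

(* Game states are described by the set D of dead nodes.  A node is alive
   iff it is not dead and it is the root or its parent is dead; all other
   non-dead nodes are asleep. *)
Definition alive (D : {set T}) (u : T) : bool :=
  (u \notin D) && ((u == r) || (par u \in D)).

Definition rank (D : {set T}) (u : T) : nat :=
  #|[set l | is_leaf l & desc l u && (l \notin D)]|.

Variable R : realType.

Definition eta (D : {set T}) (u : T) : R :=
  if alive D u then (rank D u)%:R / (rank D r)%:R else 0.

(* HERC's transport plan when the adversary kills the alive node w in state D: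
   plan x y = probability mass moved from x to y. *)
Definition herc_plan (D : {set T}) (w : T) (x y : T) : R :=
  if x == w then
    (if ~~ is_leaf w then
       (if is_child y w then eta D w * (rank D y)%:R / (rank D w)%:R else 0)
     else
       (if alive D y && (y != w) then eta D w * (eta D y / (1 - eta D w))
        else 0))
  else (if x == y then eta D x else 0).

Definition transport_cost (plan : T -> T -> R) : R :=
  \sum_(x : T) \sum_(y : T) plan x y * (dist x y)%:R.

Definition ended (D : {set T}) : bool := #|~: D| == 1%N.

Fixpoint valid_play (D : {set T}) (s : seq T) : bool :=
  if s is w :: s' then [&& ~~ ended D, alive D w & valid_play (w |: D) s']
  else true.

Fixpoint herc_cost (D : {set T}) (s : seq T) : R :=
  if s is w :: s' then transport_cost (herc_plan D w) + herc_cost (w |: D) s'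
  else 0.

End Hydra.

(* The proof is an amortized analysis with the potential
     Phi(D) = B(D) / K(D) + 3 h H_(K(D)),
   where D is the set of dead nodes, K(D) the number of live leaves, H_k the
   k-th harmonic number and B(D) the total rank of the asleep nodes; since a
   leaf has at most h non-root ancestors, B(D) <= h K(D).  Killing an inner
   node w moves the mass of w to its children, at distance 1, for a cost of
   (sum of the ranks of the children) / K, which is exactly the decrease of B.
   Killing a leaf w moves a total mass eta(w) <= 1/K over distances at most
   2h; then B/K grows by at most h/K while 3 h H_K drops by 3h/K.  So every
   step is paid for by the drop of Phi >= 0, and Phi(set0) <= h + 3h (1 + ln L). *)

From Pilot Require Import Defs.
From HB Require Import structures.
From mathcomp Require Import all_boot all_order all_algebra.
From mathcomp Require Import reals exp ring lra.
Import Order.TTheory GRing.Theory Num.Theory.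
Set Implicit Arguments. Unset Strict Implicit. Unset Printing Implicit Defensive.

Section ParentMap.
Variables (T : finType) (r : T) (par : T -> T).
Implicit Types D : {set T}.

Lemma adj_sym u v : adj par u v = adj par v u.
Proof. by rewrite /adj eq_sym orbC. Qed.

Lemma reach_trans a b x y z :
  reach par a x y -> reach par b y z -> reach par (a + b) x z.
Proof.
elim: a x => [|a IH] x /=; first by move/eqP->.
case/existsP => w /andP[xw wy] yz.
by apply/existsP; exists w; rewrite xw; exact: IH.
Qed.

Lemma reach_sym n u v : reach par n u v -> reach par n v u.
Proof.
elim: n u v => [|n IH] u v /=; first by rewrite eq_sym.
case/existsP=> w /andP[uw wv].
have wu : reach par 1 w u by apply/existsP; exists u; rewrite eqxx andbT adj_sym.
by have := reach_trans (IH _ _ wv) wu; rewrite addn1.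
Qed.

(* [dist] defaults to [#|T|] when there is no shorter walk. *)
Lemma dist_le_card u v : dist par u v <= #|T|.
Proof. by rewrite /dist (leq_trans (find_size _ _)) ?size_iota. Qed.

Lemma reach_dist_le n u v : reach par n u v -> dist par u v <= n.
Proof.
move=> uv; have [n_lt|n_ge] := ltnP n #|T|; last exact: leq_trans (dist_le_card u v) n_ge.
rewrite leqNgt; apply/negP => /(before_find 0).
by rewrite nth_iota // add0n uv.
Qed.

Lemma reach_dist u v : dist par u v < #|T| -> reach par (dist par u v) u v.
Proof.
move=> lt_card; have has_walk : has (fun n => reach par n u v) (iota 0 #|T|).
  by rewrite has_find size_iota.
by have := nth_find 0 has_walk; rewrite nth_iota ?add0n // -(size_iota 0 #|T|) -has_find.
Qed.

Lemma distxx x : dist par x x = 0.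
Proof. by apply/eqP; rewrite -leqn0; apply: (reach_dist_le (n := 0)) => /=. Qed.

Lemma depth_le_height x : depth r par x <= height r par.
Proof. exact: (@leq_bigmax T (depth r par) x). Qed.

Lemma dist_le_depthD x y : dist par x y <= depth r par x + depth r par y.
Proof.
have [xr|xr] := ltnP (depth r par x) #|T|; last first.
  exact: leq_trans (dist_le_card x y) (leq_trans xr (leq_addr _ _)).
have [yr|yr] := ltnP (depth r par y) #|T|; last first.
  exact: leq_trans (dist_le_card x y) (leq_trans yr (leq_addl _ _)).
exact/reach_dist_le/(reach_trans (reach_dist xr) (reach_sym (reach_dist yr))).
Qed.

Lemma dist_le_double_height x y : dist par x y <= (height r par).*2.
Proof. by rewrite -addnn (leq_trans (dist_le_depthD x y)) ?leq_add ?depth_le_height. Qed.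

Lemma desc_fconnect v u : desc par v u = fconnect par v u.
Proof.
apply/existsP/idP => [[k /eqP <-]|vu]; first exact: fconnect_iter.
have k_lt : findex par v u < #|T| by exact: leq_trans (findex_max vu) (max_card _).
by exists (Ordinal k_lt); rewrite iter_findex.
Qed.

Lemma fconnect_par_total l a b :
  fconnect par l a -> fconnect par l b -> fconnect par a b || fconnect par b a.
Proof.
move=> /iter_findex <- /iter_findex <-.
have [ij|ji] := leqP (findex par l a) (findex par l b).
  by rewrite -(subnK ij) iterD fconnect_iter.
by rewrite -(subnK (ltnW ji)) iterD fconnect_iter orbT.
Qed.

(* Holds for every game state reachable from [set0]. *)
Definition par_closed D := forall x, x \in D -> par x \in D.

Lemma par_closed_iter D x k : par_closed D -> x \in D -> iter k par x \in D.
Proof. by move=> closedD xD; elim: k => //= k; exact: closedD. Qed.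

End ParentMap.

Section RootedTree.
Variables (T : finType) (r : T) (par : T -> T).
Hypothesis tree : is_rooted_tree r par.
Implicit Types D : {set T}.

Lemma iter_par_root k : iter k par r = r.
Proof. by case: tree => par_r _; elim: k => //= k ->. Qed.

Lemma fconnect_root x : fconnect par x r.
Proof. by case: tree => _ /(_ x) [k <-]; exact: fconnect_iter. Qed.

Lemma par_fixed_root x : par x = x -> x = r.
Proof. by move=> par_x; case: tree => _ /(_ x) [k <-]; elim: k => //= k <-. Qed.

Lemma child_neq c u : is_child r par c u -> c != u.
Proof.
case/andP=> c_r /eqP par_c; apply: contra c_r => /eqP c_u.
by rewrite -(par_fixed_root (etrans par_c (esym c_u))).
Qed.

Lemma dist_child_le1 c u : is_child r par c u -> dist par u c <= 1.
Proof.
move=> cu; apply: (reach_dist_le (n := 1)); apply/existsP; exists c.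
case/andP: (cu) => _ /eqP par_c.
by rewrite /adj eq_sym child_neq //= par_c !eqxx orbT.
Qed.

Lemma fconnect_leaf w l : is_leaf r par w -> fconnect par l w -> l = w.
Proof.
move=> /forallP leaf_w /iter_findex; move: (findex par l w) => k.
elim: k l => // k IH l.
rewrite iterSr => /IH par_l; apply/eqP; apply: contraT => l_w.
have l_r : l != r by apply: contra l_w => /eqP l_r; rewrite -par_l l_r; case: tree => ->.
by have := leaf_w l; rewrite /is_child l_r par_l eqxx.
Qed.

Lemma par_closed_setU1 D w :
  par_closed par D -> alive r par D w -> par_closed par (w |: D).
Proof.
move=> closedD /andP[_ w_exposed] x; rewrite !inE => /orP[/eqP ->|xD].
  by case/orP: w_exposed => [/eqP ->|->]; [case: tree => ->; rewrite eqxx | rewrite orbT].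
by rewrite closedD ?orbT.
Qed.

Lemma alive_fconnect_eq D a b : par_closed par D ->
  alive r par D a -> alive r par D b -> fconnect par a b -> a = b.
Proof.
move=> closedD /andP[_ a_exposed] /andP[bD _] /iter_findex.
case: (findex par a b) => // k; rewrite iterSr => ab; rewrite -ab in bD *.
case/orP: a_exposed => [/eqP ->|par_aD]; first by case: tree => -> _; rewrite iter_par_root.
by rewrite par_closed_iter in bD.
Qed.

Definition nonroot_ancestors (u : T) := [set x | (x != r) && fconnect par u x].

Lemma card_nonroot_ancestors_le n u : reach par n u r -> #|nonroot_ancestors u| <= n.
Proof.
elim: n u => [|n IH] u /=.
  move/eqP => ->; rewrite leqn0 cards_eq0; apply/eqP/setP => x; rewrite !inE.
  by apply/negP => /andP[x_r /iter_findex]; rewrite iter_par_root => r_x; rewrite r_x eqxx in x_r.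
case/existsP => w /andP[/andP[u_w /orP[/eqP par_u|/eqP par_w]] wr].
  have anc_u : nonroot_ancestors u \subset u |: nonroot_ancestors w.
    apply/subsetP => x; rewrite !inE => /andP[x_r /iter_findex].
    case: (findex par u x) => [/= ->|k]; first by rewrite eqxx.
    by rewrite iterSr par_u => w_x; rewrite x_r -w_x fconnect_iter orbT.
  by rewrite (leq_trans (subset_leq_card anc_u)) // cardsU1 -add1n leq_add ?leq_b1 ?IH.
have anc_u : nonroot_ancestors u \subset nonroot_ancestors w.
  apply/subsetP => x; rewrite !inE => /andP[-> ux] /=.
  by apply: connect_trans ux; rewrite -par_w fconnect1.
by rewrite (leq_trans (subset_leq_card anc_u)) // (leq_trans (IH _ wr)).
Qed.

Lemma card_nonroot_ancestors_le_height u : #|nonroot_ancestors u| <= height r par.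
Proof.
apply: leq_trans (depth_le_height r par u).
have [lt_card|ge_card] := ltnP (depth r par u) #|T|.
  exact/card_nonroot_ancestors_le/reach_dist.
exact: leq_trans (max_card _) ge_card.
Qed.

Lemma card_set_sum_nat (p : pred T) : #|[set x | p x]| = \sum_x p x.
Proof. by rewrite -sum1dep_card big_mkcond; apply: eq_bigr => x _; case: (p x). Qed.

Definition live_leaf (D : {set T}) l := is_leaf r par l && (l \notin D).

Lemma rank_sum D x : rank r par D x = \sum_l (live_leaf D l && fconnect par l x).
Proof.
rewrite /rank -card_set_sum_nat; apply: eq_card => l; rewrite !inE desc_fconnect.
by rewrite /live_leaf -andbA [_ && (l \notin D)]andbC.
Qed.

Lemma rank_root D : rank r par D r = \sum_l live_leaf D l.
Proof. by rewrite rank_sum; apply: eq_bigr => l _; rewrite fconnect_root andbT. Qed.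

Lemma sum_rank_le_mul D (Q : pred T) c :
  (forall l, live_leaf D l -> #|[set x | Q x && fconnect par l x]| <= c) ->
  \sum_(x | Q x) rank r par D x <= c * rank r par D r.
Proof.
move=> cover_le.
rewrite (eq_bigr _ (fun x _ => rank_sum D x)) exchange_big rank_root big_distrr.
apply: leq_sum => l _; case: (boolP (live_leaf D l)) => /= [live_l|_]; last by rewrite big1.
rewrite muln1 (leq_trans _ (cover_le _ live_l)) // card_set_sum_nat big_mkcond.
by apply: eq_leq; apply: eq_bigr => x _; case: (Q x).
Qed.

Lemma sum_rank_alive_le D : par_closed par D ->
  \sum_(y | alive r par D y) rank r par D y <= rank r par D r.
Proof.
move=> closedD; rewrite -[leqRHS]mul1n; apply: sum_rank_le_mul => l _.
apply/card_le1_eqP => x y; rewrite !inE => /andP[alive_x lx] /andP[alive_y ly].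
have /orP[xy|yx] := fconnect_par_total lx ly.
  exact/esym/(alive_fconnect_eq closedD alive_x alive_y xy).
exact: (alive_fconnect_eq closedD alive_y alive_x yx).
Qed.

(* For [par_closed D] the sum ranges exactly over the asleep nodes. *)
Definition asleep_rank (D : {set T}) :=
  \sum_(x | (x != r) && (par x \notin D)) rank r par D x.

Lemma asleep_rank_le_height D : asleep_rank D <= height r par * rank r par D r.
Proof.
apply: sum_rank_le_mul => l _; apply: leq_trans (card_nonroot_ancestors_le_height l).
by apply/subset_leq_card/subsetP => x; rewrite !inE => /andP[/andP[-> _] ->].
Qed.

Lemma rank_subset D D' x : D \subset D' -> rank r par D' x <= rank r par D x.
Proof.
move=> /subsetP DD'; apply/subset_leq_card/subsetP => l; rewrite !inE.
by case/and3P => -> -> /=; apply: contra; exact: DD'.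
Qed.

Lemma asleep_rank_subset D D' : D \subset D' -> asleep_rank D' <= asleep_rank D.
Proof.
move=> DD'; rewrite /asleep_rank [leqLHS]big_mkcond [leqRHS]big_mkcond leq_sum // => x _.
case: (x != r) => //=; case: (boolP (par x \in D')) => [_|parD']; first exact: leq0n.
by rewrite (contra (subsetP DD' _) parD') rank_subset.
Qed.

Lemma rank_setU1_nonleaf D w x :
  ~~ is_leaf r par w -> rank r par (w |: D) x = rank r par D x.
Proof.
move=> inner_w; apply: eq_card => l; rewrite !inE.
case: (boolP (is_leaf r par l)) => //= leaf_l.
by have -> : (l == w) = false by apply: contraNF inner_w => /eqP <-.
Qed.

Lemma rank_root_setU1_leaf D w : is_leaf r par w -> w \notin D ->
  rank r par D r = (rank r par (w |: D) r).+1.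
Proof.
move=> leaf_w wD; rewrite !rank_root (bigD1 w) // [in RHS](bigD1 w) //=.
rewrite /live_leaf leaf_w wD setU11 /=; congr _.+1; apply: eq_bigr => l l_w.
by rewrite in_setU1 (negbTE l_w).
Qed.

Lemma rank_leaf_le1 D w : is_leaf r par w -> rank r par D w <= 1.
Proof.
move=> leaf_w; rewrite -(cards1 w); apply/subset_leq_card/subsetP => l.
by rewrite !inE desc_fconnect => /and3P[_ /(fconnect_leaf leaf_w) ->].
Qed.

Lemma asleep_rank_setU1_nonleaf D w : w \notin D -> ~~ is_leaf r par w ->
  asleep_rank D = asleep_rank (w |: D) + \sum_(y | is_child r par y w) rank r par D y.
Proof.
move=> wD inner_w; rewrite /asleep_rank [in LHS](bigID (fun x => par x == w)) /= [in LHS]addnC.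
congr (_ + _).
  apply: eq_big => [x|x _]; last by rewrite rank_setU1_nonleaf.
  by rewrite in_setU1 negb_or -andbA [(par x != w) && _]andbC.
apply: eq_bigl => x; rewrite /is_child -andbA.
by case: (eqVneq (par x) w) => [->|_]; rewrite ?wD ?andbF.
Qed.

End RootedTree.

Local Open Scope ring_scope.

Definition harmonic_sum {R : numFieldType} (n : nat) : R := \sum_(i < n) i.+1%:R^-1.

Lemma harmonic_sumS (R : numFieldType) n :
  harmonic_sum n.+1 = harmonic_sum n + n.+1%:R^-1 :> R.
Proof. by rewrite /harmonic_sum big_ord_recr. Qed.

Lemma harmonic_sum_ge0 (R : numFieldType) n : 0 <= harmonic_sum n :> R.
Proof. by apply: sumr_ge0 => i _; rewrite invr_ge0. Qed.

Lemma harmonic_sum_le_ln (R : realType) n : harmonic_sum n <= 1 + ln (n%:R : R).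
Proof.
elim: n => [|[|n] IH]; first by rewrite /harmonic_sum big_ord0 ln0 ?addr0.
  by rewrite harmonic_sumS /harmonic_sum big_ord0 ln1 add0r invr1 addr0.
rewrite harmonic_sumS.
set m : R := n.+2%:R.
have m_gt0 : 0 < m by rewrite ltr0n.
have m_inv_lt1 : -1 < - m^-1 by rewrite ltrN2 invf_lt1 // ltr1n.
have pred_m : n.+1%:R = m * (1 - m^-1).
  by rewrite mulrBr mulr1 divff ?gt_eqF // /m -[n.+2]addn1 natrD addrK.
have ln_pred_m : ln (n.+1%:R : R) = ln m + ln (1 - m^-1).
  by rewrite pred_m lnM // posrE subr_gt0 invf_lt1 // ltr1n.
have := le_ln1Dx m_inv_lt1; rewrite ln_pred_m in IH; clearbody m; lra.
Qed.

Lemma div_sub_divS_le (R : realFieldType) (a b h : R) (k : nat) :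
  0 <= a <= b -> a <= h * k%:R -> 0 <= h -> a / k%:R - b / k.+1%:R <= h / k.+1%:R.
Proof.
move=> /andP[a_ge0 ab] a_le h_ge0; case: k a_le => [|k] a_le.
  by rewrite invr0 mulr0 add0r invr1 !mulr1; lra.
have k_gt0 : (0 : R) < k.+1%:R by rewrite ltr0n.
have q_le : a / k.+1%:R <= h by rewrite ler_pdivrMr.
have a_div : a / k.+1%:R - a / k.+2%:R = a / k.+1%:R / k.+2%:R.
  by field; apply/andP; split; apply/negP => /eqP; have := ler0n R k; lra.
apply: (@le_trans _ _ (a / k.+1%:R - a / k.+2%:R)).
  by rewrite lerD2l lerN2 ler_pM2r ?invr_gt0.
by rewrite a_div ler_pM2r ?invr_gt0.
Qed.

Lemma mul_div_subr_le (R : realFieldType) (e s : R) :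
  0 <= e -> 0 <= s <= 1 - e -> e / (1 - e) * s <= e.
Proof.
move=> e_ge0 /andP[s_ge0 s_le]; have [->|e_neq1] := eqVneq e 1.
  by rewrite subrr invr0 mulr0 mul0r.
have e1_gt0 : 0 < 1 - e by rewrite lt0r subr_eq0 eq_sym e_neq1 (le_trans s_ge0).
by rewrite mulrAC ler_pdivrMr // ler_wpM2l.
Qed.

Section Herc.
Variables (T : finType) (r : T) (par : T -> T) (R : realType).
Hypothesis tree : is_rooted_tree r par.
Implicit Types D : {set T}.

Local Notation rank := (rank r par).
Local Notation eta := (Defs.eta r par R).
Local Notation plan := (herc_plan r par R).
Local Notation live D := ((rank D r)%:R : R).
Local Notation h := ((height r par)%:R : R).
Local Notation asleep D := ((asleep_rank r par D)%:R : R).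

Lemma eta_alive D u : alive r par D u -> eta D u = (rank D u)%:R / live D.
Proof. by rewrite /Defs.eta => ->. Qed.

Lemma eta_ge0 D u : 0 <= eta D u.
Proof. by rewrite /Defs.eta; case: alive => //; rewrite divr_ge0. Qed.

Lemma sum_eta_alive_le1 D : par_closed par D -> \sum_(y | alive r par D y) eta D y <= 1.
Proof.
move=> closedD; rewrite (eq_bigr _ (fun y => eta_alive (D := D) (u := y))) -mulr_suml -natr_sum.
have [->|live_gt0] := posnP (rank D r); first by rewrite invr0 mulr0.
by rewrite ler_pdivrMr ?ltr0n // mul1r ler_nat sum_rank_alive_le.
Qed.

Lemma transport_cost_herc_plan D w :
  transport_cost par (plan D w) = \sum_y plan D w w y * (dist par w y)%:R.
Proof.
rewrite /transport_cost (bigD1 w) //= [X in _ + X]big1 ?addr0 // => x x_w.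
apply: big1 => y _; rewrite /herc_plan (negbTE x_w).
by case: eqP => [<-|_]; rewrite ?distxx ?mulr0 ?mul0r.
Qed.

Lemma cost_kill_inner_le D w : alive r par D w -> ~~ is_leaf r par w ->
  transport_cost par (plan D w)
    <= (\sum_(y | is_child r par y w) rank D y)%:R / live D.
Proof.
move=> alive_w inner_w; rewrite transport_cost_herc_plan /herc_plan eqxx inner_w /=.
rewrite natr_sum mulr_suml [leRHS]big_mkcond /=; apply: ler_sum => y _.
case: ifP => [child_y|_]; last by rewrite mul0r.
have mass_le : eta D w * (rank D y)%:R / (rank D w)%:R <= (rank D y)%:R / live D.
  rewrite eta_alive //; have [->|rank_w_gt0] := posnP (rank D w).
    by rewrite !mul0r divr_ge0.
  by rewrite mulrAC [X in X * _]mulrAC divff ?mul1r 1?mulrC // pnatr_eq0 -lt0n.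
apply: le_trans mass_le; apply: ler_piMr; first by rewrite divr_ge0 ?mulr_ge0 ?eta_ge0.
by rewrite lern1 (dist_child_le1 tree child_y).
Qed.

Lemma cost_kill_leaf_le D w : par_closed par D -> alive r par D w -> is_leaf r par w ->
  transport_cost par (plan D w) <= 2 * h / live D.
Proof.
move=> closedD alive_w leaf_w; set e := eta D w.
set others := \sum_(y | alive r par D y && (y != w)) eta D y.
have others_le : 0 <= others <= 1 - e.
  rewrite sumr_ge0 => [|y _]; last exact: eta_ge0.
  by have := sum_eta_alive_le1 closedD; rewrite (bigD1 w) //= -/e -/others lerBrDl addrC.
have e_le1 : e <= 1 by case/andP: others_le => /le_trans/[apply]; rewrite subr_ge0.
have e_le : e <= (live D)^-1 by rewrite /e eta_alive // ler_piMl ?invr_ge0 // lern1 rank_leaf_le1.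
have dist_le y : (dist par w y)%:R <= 2 * h.
  by rewrite -natrM ler_nat mul2n dist_le_double_height.
rewrite transport_cost_herc_plan /herc_plan eqxx leaf_w /=.
apply: (@le_trans _ _ (\sum_(y | alive r par D y && (y != w)) e / (1 - e) * eta D y * (2 * h))).
  rewrite [leRHS]big_mkcond /=; apply: ler_sum => y _; case: ifP => _; last by rewrite mul0r.
  rewrite -/e mulrCA [eta D y * _]mulrC.
  apply: ler_wpM2l (dist_le y).
  by rewrite mulr_ge0 ?eta_ge0 // divr_ge0 ?eta_ge0 // subr_ge0.
rewrite -mulr_suml -mulr_sumr -/others [leRHS]mulrC ler_wpM2r ?mulr_ge0 //.
exact: le_trans (mul_div_subr_le (eta_ge0 D w) others_le) e_le.
Qed.

Definition potential D : R :=
  asleep D / live D + 3 * h * harmonic_sum (rank D r).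

Lemma potential_ge0 D : 0 <= potential D.
Proof. by rewrite /potential addr_ge0 ?mulr_ge0 ?invr_ge0 ?harmonic_sum_ge0. Qed.

Lemma potential_kill_inner D w : alive r par D w -> ~~ is_leaf r par w ->
  transport_cost par (plan D w) + potential (w |: D) <= potential D.
Proof.
move=> alive_w inner_w; have wD : w \notin D by case/andP: alive_w.
rewrite /potential (rank_setU1_nonleaf _ _ inner_w).
rewrite [in leRHS](asleep_rank_setU1_nonleaf wD inner_w) natrD mulrDl.
have := cost_kill_inner_le alive_w inner_w; lra.
Qed.

Lemma potential_kill_leaf D w : par_closed par D -> alive r par D w -> is_leaf r par w ->
  transport_cost par (plan D w) + potential (w |: D) <= potential D.
Proof.
move=> closedD alive_w leaf_w; have wD : w \notin D by case/andP: alive_w.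
have := cost_kill_leaf_le closedD alive_w leaf_w.
rewrite /potential (rank_root_setU1_leaf tree leaf_w wD) harmonic_sumS.
set k := rank (w |: D) r.
have drop : asleep (w |: D) / k%:R - asleep D / k.+1%:R <= h / k.+1%:R.
  apply: div_sub_divS_le => //.
    by rewrite ler0n ler_nat asleep_rank_subset ?subsetUr.
  by rewrite -natrM ler_nat asleep_rank_le_height.
(* [lra] is linear: the quotients and products are abstracted as atoms. *)
rewrite mulrDr -!mulrA; move: drop.
move: (asleep (w |: D) / k%:R) (asleep D / k.+1%:R) (h / k.+1%:R) (h * harmonic_sum k).
by move=> x y c H; lra.
Qed.

Lemma herc_cost_le_potential D s : par_closed par D -> valid_play r par D s ->
  herc_cost r par R D s <= potential D.
Proof.
elim: s D => [|w s IH] D closedD /=; first by rewrite potential_ge0.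
case/and3P => _ alive_w valid_s.
apply: le_trans (_ : transport_cost par (plan D w) + potential (w |: D) <= _).
  by rewrite lerD2l; apply: IH => //; exact: (par_closed_setU1 tree closedD alive_w).
have [leaf_w|inner_w] := boolP (is_leaf r par w).
  exact: potential_kill_leaf.
exact: potential_kill_inner.
Qed.

Lemma potential_set0_le : potential set0 <= 4 * h * (1 + ln (nleaves r par)%:R).
Proof.
have live_set0 : rank set0 r = nleaves r par.
  rewrite (rank_root tree) /nleaves card_set_sum_nat.
  by apply: eq_bigr => l _; rewrite /live_leaf inE andbT.
rewrite /potential live_set0; set L := nleaves r par.
have asleep_le : asleep set0 / L%:R <= h.
  have [->|L_gt0] := posnP L; first by rewrite invr0 mulr0.
  by rewrite ler_pdivrMr ?ltr0n // -natrM ler_nat /L -live_set0 asleep_rank_le_height.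
have ln_ge0 : 0 <= ln (L%:R : R).
  have [->|L_gt0] := posnP L; first by rewrite ln0.
  by rewrite ln_ge0 // ler1n.
have harmonic_le : 3 * h * harmonic_sum L <= 3 * h * (1 + ln L%:R).
  by rewrite ler_wpM2l ?harmonic_sum_le_ln // mulr_ge0.
have hln_ge0 : 0 <= h * ln (L%:R : R) by rewrite mulr_ge0.
move: asleep_le harmonic_le hln_ge0; rewrite !mulrDr !mulr1 -!mulrA.
move: (asleep set0 / L%:R) (h * harmonic_sum L) (h * ln (L%:R : R)) (ler0n R (height r par)).
by move=> x y z; lra.
Qed.

End Herc.

Theorem theorem4 (R : realType) :
  exists C : R,
    forall (T : finType) (r : T) (par : T -> T),
      is_rooted_tree r par ->
      forall s : seq T,
        valid_play r par set0 s ->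
        herc_cost r par R set0 s
          <= C * (height r par)%:R * (1 + ln (nleaves r par)%:R).
Proof.
exists 4 => T r par tree s valid_s.
apply: le_trans (potential_set0_le R tree).
by apply: herc_cost_le_potential => // x; rewrite inE.
Qed.
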